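(* If a path $\omega\in\Omega$ is ML-random for a computable precise forecasting system $\varphi$, then $I_\textnormal{ML}(\omega)$ is the smallest interval forecast for which $\omega$ is almost ML-random; that is, $\omega$ is almost ML-random for $I_\textnormal{ML}(\omega)$, and $I_\textnormal{ML}(\omega)\subseteq I$ for every interval forecast $I$ for which $\omega$ is almost ML-random.
   Context: $\mathcal{X}=\{0,1\}$; $\Omega=\mathcal{X}^{\mathbb{N}}$ (paths); $\mathbb{S}=\bigcup_{n\ge0}\mathcal X^n$ (situations), $\square$ the empty string, $\omega_{1:n}=(\omega_1,\dots,\omega_n)$. $\mathcal I$: nonempty closed intervals $I\subseteq[0,1]$. A forecasting system is a map $\varphi:\mathbb S\to\mathcal I$, with $\underline\varphi=\min\varphi$, $\overline\varphi=\max\varphi$; precise if $\underline\varphi=\overline\varphi$; an interval forecast $I$ is identified with the constant forecasting system $s\mapsto I$. A real map $r$ on a countable effectively encoded set $\mathcal D$ is computable if there is a recursive $q:\mathcal D\times\mathbb N_0\to\mathbb Q$ with $|r(d)-q(d,n)|<2^{-n}$; lower semicomputable if there is a recursive $q$ with $q(d,n+1)\ge q(d,n)$ and $\lim_nq(d,n)=r(d)$. $\varphi$ is computable if $\underline\varphi,\overline\varphi$ are. For $f:\mathcal X\to\mathbb R$, $\overline E_I(f)=\max_{p\in I}[pf(1)+(1-p)f(0)]$. A test supermartingale for $\varphi$ is $T:\mathbb S\to\mathbb R_{\ge0}$ with $T(\square)=1$ and $\overline E_{\varphi(s)}(T(s\,\cdot)-T(s))\le0$ for all $s$. $\omega$ is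 ML-random for $\varphi$ if no lower semicomputable test supermartingale $T$ for $\varphi$ satisfies $\limsup_nT(\omega_{1:n})=\infty$. $\mathcal I_\textnormal{ML}(\omega)=\{I\in\mathcal I:\omega\text{ ML-random for }I\}$, $I_\textnormal{ML}(\omega)=\bigcap_{I\in\mathcal I_\textnormal{ML}(\omega)}I$. $\omega$ is almost ML-random for $I\in\mathcal I$ if it is ML-random for every interval forecast $[\min I-\epsilon_1,\max I+\epsilon_2]\cap[0,1]$ with $\epsilon_1,\epsilon_2>0$. *)

From Stdlib Require Import Reals Lra Lia List Arith.
Import ListNotations.
Open Scope R_scope.

Inductive code : Type :=
| CZero : code
| CSucc : code
| CProj : nat -> code
| CComp : code -> list code -> code
| CPrimRec : code -> code -> code
| CMu : code -> code.

Inductive eval : code -> list nat -> nat -> Prop :=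
| ev_zero : forall v, eval CZero v 0
| ev_succ : forall x v, eval CSucc (x :: v) (S x)
| ev_proj : forall i v, (i < length v)%nat -> eval (CProj i) v (nth i v 0%nat)
| ev_comp : forall f gs v ys y,
    evals gs v ys -> eval f ys y -> eval (CComp f gs) v y
| ev_rec0 : forall f g v y, eval f v y -> eval (CPrimRec f g) (0%nat :: v) y
| ev_recS : forall f g n v z y,
    eval (CPrimRec f g) (n :: v) z -> eval g (n :: z :: v) y ->
    eval (CPrimRec f g) (S n :: v) y
| ev_mu : forall f v n,
    eval f (n :: v) 0 ->
    (forall m, (m < n)%nat -> exists k, eval f (m :: v) (S k)) ->
    eval (CMu f) v n
with evals : list code -> list nat -> list nat -> Prop :=
| evs_nil : forall v, evals [] v []
| evs_cons : forall g gs v y ys,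
    eval g v y -> evals gs v ys -> evals (g :: gs) v (y :: ys).

Definition npair (x y : nat) : nat := ((x + y) * (x + y + 1) / 2 + y)%nat.

(* bijective base-2 encoding of situations (finite binary strings) *)
Fixpoint enc_sit (s : list bool) : nat :=
  match s with
  | [] => 0%nat
  | b :: s' => (2 * enc_sit s' + (if b then 2 else 1))%nat
  end.

(** A map q : S x N -> Q is recursive: some mu-recursive program maps the code
    of (d, n) to the code of a triple (a, b, k) with q d n = (a - b)/(k + 1). *)
Definition recursive_rat (q : list bool -> nat -> R) : Prop :=
  exists c : code, forall (d : list bool) (n : nat),
    exists a b k : nat,
      eval c [npair (enc_sit d) n] (npair a (npair b k)) /\
      q d n = (INR a - INR b) / (INR k + 1).

Definition computable (r : list bool -> R) : Prop :=
  exists q, recursive_rat q /\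
    forall d n, Rabs (r d - q d n) < (/ 2) ^ n.

Definition lower_semicomputable (r : list bool -> R) : Prop :=
  exists q, recursive_rat q /\
    (forall d n, q d n <= q d (S n)) /\
    (forall d, Un_cv (q d) (r d)).

(* a path omega = (omega_1, omega_2, ...) is represented by w : nat -> bool
   with omega_{i+1} = w i; omega_{1:n} is the list [w 0; ...; w (n-1)] *)
Definition prefix (w : nat -> bool) (n : nat) : list bool := map w (seq 0 n).

(* a forecasting system phi is given by its lower and upper maps
   lo = min phi, hi = max phi *)
Definition forecasting_system (lo hi : list bool -> R) : Prop :=
  forall s, 0 <= lo s /\ lo s <= hi s /\ hi s <= 1.

Definition upper_exp (a b : R) (f : bool -> R) : R :=
  Rmax (a * f true + (1 - a) * f false) (b * f true + (1 - b) * f false).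

(* situation s followed by outcome x is s ++ [x] *)
Definition test_supermartingale (lo hi : list bool -> R) (T : list bool -> R) : Prop :=
  T [] = 1 /\ (forall s, 0 <= T s) /\
  (forall s, upper_exp (lo s) (hi s) (fun x => T (s ++ [x]) - T s) <= 0).

Definition ML_random (lo hi : list bool -> R) (w : nat -> bool) : Prop :=
  ~ exists T, lower_semicomputable T /\ test_supermartingale lo hi T /\
      (forall (M : R) (N : nat), exists n, (N <= n)%nat /\ M < T (prefix w n)).

(* interval forecast [a,b] as a constant forecasting system *)
Definition is_interval (a b : R) : Prop := 0 <= a /\ a <= b /\ b <= 1.

Definition ML_random_I (a b : R) (w : nat -> bool) : Prop :=
  ML_random (fun _ => a) (fun _ => b) w.

Definition I_ML (w : nat -> bool) (x : R) : Prop :=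
  forall a b, is_interval a b -> ML_random_I a b w -> a <= x /\ x <= b.

Definition almost_ML_random (a b : R) (w : nat -> bool) : Prop :=
  forall e1 e2, 0 < e1 -> 0 < e2 ->
    ML_random_I (Rmax (a - e1) 0) (Rmin (b + e2) 1) w.

From Stdlib Require Import Reals Lra Lia List Arith Bool ZArith Classical ClassicalEpsilon.
Import ListNotations.
Open Scope R_scope.

(* Let [a] and [b] be the lower and upper limits of the forecasts [phi (w_{1:n})].

   Were [w] ML-random for an interval [[c, d]] with [a < c], the forecasts would drop below
   [c - delta] infinitely often, at situations that can be recognised computably. Betting at
   those situations against [[c, d]] on one outcome and against [phi] on the other, with
   factors whose products exceed [1] by a fixed amount, yields two lower semicomputable test
   supermartingales whose product is unbounded along [w], so one of them is unbounded and one
   of the two randomness assumptions fails. Symmetrically [b <= d].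

   Conversely the forecasts eventually stay within [eps / 2] of [[a, b]]. A test
   supermartingale for [[a - eps, b + eps]] that only starts betting after a long enough
   prefix of [w], and freezes as soon as a forecast leaves that region, is a test
   supermartingale for [phi]; so [w] is ML-random for every enlargement of [[a, b]]. *)

(** * Mu-recursive functions *)

Definition recursive (n : nat) (f : list nat -> nat) : Prop :=
  exists c, forall v, length v = n -> eval c v (f v).

Definition rec1 (h : nat -> nat) : Prop := recursive 1 (fun v => h (nth 0 v 0%nat)).
Definition rec2 (h : nat -> nat -> nat) : Prop :=
  recursive 2 (fun v => h (nth 0 v 0%nat) (nth 1 v 0%nat)).
Definition rec3 (h : nat -> nat -> nat -> nat) : Prop :=
  recursive 3 (fun v => h (nth 0 v 0%nat) (nth 1 v 0%nat) (nth 2 v 0%nat)).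

Section Recursive_functions.
Local Open Scope nat_scope.

Lemma recursive_ext n f g :
  (forall v, length v = n -> f v = g v) -> recursive n f -> recursive n g.
Proof. intros H [c Hc]. exists c. intros v Hv. rewrite <- H by exact Hv. auto. Qed.

Lemma recursive_proj n i : i < n -> recursive n (fun v => nth i v 0).
Proof. intros H. exists (CProj i). intros v Hv. constructor. lia. Qed.

Lemma recursive_comp n (fs : list (list nat -> nat)) g :
  Forall (recursive n) fs -> recursive (length fs) g ->
  recursive n (fun v => g (map (fun f => f v) fs)).
Proof.
  intros Hfs Hg.
  assert (Hgs : exists gs, forall v, length v = n -> evals gs v (map (fun f => f v) fs)).
  { clear Hg. induction Hfs as [|f fs [cf Hf] _ [gs IH]].
    - exists nil. constructor.
    - exists (cf :: gs). intros v Hv. constructor; auto. }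
  destruct Hg as [cg Hg], Hgs as [gs Hgs]. exists (CComp cg gs). intros v Hv.
  econstructor; [now apply Hgs|]. apply Hg. now rewrite length_map.
Qed.

Lemma recursive_rect n f g :
  recursive n f -> recursive (S (S n)) g ->
  recursive (S n) (fun v => nat_rect (fun _ => nat) (f (tl v))
                              (fun i z => g (i :: z :: tl v)) (hd 0 v)).
Proof.
  intros [cf Hf] [cg Hg]. exists (CPrimRec cf cg). intros [|x v] Hv; simpl in Hv; [lia|].
  induction x as [|x IH]; simpl.
  - constructor. apply Hf. lia.
  - econstructor; [exact IH|]. apply Hg. simpl. lia.
Qed.

Lemma recursive_comp1 n a h : recursive n a -> rec1 h -> recursive n (fun v => h (a v)).
Proof. intros Ha Hh. exact (recursive_comp n [a] _ ltac:(repeat constructor; auto) Hh). Qed.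

Lemma recursive_comp2 n a b h :
  recursive n a -> recursive n b -> rec2 h -> recursive n (fun v => h (a v) (b v)).
Proof. intros Ha Hb Hh. exact (recursive_comp n [a; b] _ ltac:(repeat constructor; auto) Hh). Qed.

Lemma recursive_comp3 n a b c h :
  recursive n a -> recursive n b -> recursive n c -> rec3 h ->
  recursive n (fun v => h (a v) (b v) (c v)).
Proof.
  intros Ha Hb Hc Hh. exact (recursive_comp n [a; b; c] _ ltac:(repeat constructor; auto) Hh).
Qed.

Lemma rec1_succ : rec1 S.
Proof. exists CSucc. intros [|x [|]] Hv; simpl in Hv; try lia. constructor. Qed.

Lemma recursive_const n k : recursive n (fun _ => k).
Proof.
  induction k as [|k IH]; [exists CZero; constructor|].
  exact (recursive_comp1 n (fun _ => k) S IH rec1_succ).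
Qed.

Lemma rec1_ext f g : (forall x, f x = g x) -> rec1 f -> rec1 g.
Proof. intros H. apply recursive_ext. intros. apply H. Qed.
Lemma rec2_ext f g : (forall x y, f x y = g x y) -> rec2 f -> rec2 g.
Proof. intros H. apply recursive_ext. intros. apply H. Qed.
Lemma rec3_ext f g : (forall x y z, f x y z = g x y z) -> rec3 f -> rec3 g.
Proof. intros H. apply recursive_ext. intros. apply H. Qed.

Lemma rec1_id : rec1 (fun x => x).
Proof. apply recursive_proj. lia. Qed.
Lemma rec2_fst : rec2 (fun x y => x).
Proof. apply recursive_proj. lia. Qed.
Lemma rec2_snd : rec2 (fun x y => y).
Proof. apply recursive_proj. lia. Qed.
Lemma rec3_fst : rec3 (fun x y z => x).
Proof. apply recursive_proj. lia. Qed.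
Lemma rec3_snd : rec3 (fun x y z => y).
Proof. apply recursive_proj. lia. Qed.
Lemma rec3_thd : rec3 (fun x y z => z).
Proof. apply recursive_proj. lia. Qed.

Lemma rec1_const k : rec1 (fun _ => k).
Proof. exact (recursive_const 1 k). Qed.
Lemma rec2_const k : rec2 (fun _ _ => k).
Proof. exact (recursive_const 2 k). Qed.
Lemma rec3_const k : rec3 (fun _ _ _ => k).
Proof. exact (recursive_const 3 k). Qed.

Lemma rec1_comp1 f h : rec1 f -> rec1 h -> rec1 (fun x => h (f x)).
Proof. apply recursive_comp1. Qed.
Lemma rec1_comp2 f g h : rec1 f -> rec1 g -> rec2 h -> rec1 (fun x => h (f x) (g x)).
Proof. apply recursive_comp2. Qed.
Lemma rec1_comp3 f g k h :
  rec1 f -> rec1 g -> rec1 k -> rec3 h -> rec1 (fun x => h (f x) (g x) (k x)).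
Proof. apply recursive_comp3. Qed.
Lemma rec2_comp1 f h : rec2 f -> rec1 h -> rec2 (fun x y => h (f x y)).
Proof. apply recursive_comp1. Qed.
Lemma rec2_comp2 f g h : rec2 f -> rec2 g -> rec2 h -> rec2 (fun x y => h (f x y) (g x y)).
Proof. apply recursive_comp2. Qed.
Lemma rec3_comp1 f h : rec3 f -> rec1 h -> rec3 (fun x y z => h (f x y z)).
Proof. apply recursive_comp1. Qed.
Lemma rec3_comp2 f g h :
  rec3 f -> rec3 g -> rec2 h -> rec3 (fun x y z => h (f x y z) (g x y z)).
Proof. apply recursive_comp2. Qed.
Lemma rec3_comp3 f g k h : rec3 f -> rec3 g -> rec3 k -> rec3 h ->
  rec3 (fun x y z => h (f x y z) (g x y z) (k x y z)).
Proof. apply recursive_comp3. Qed.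

Lemma rec2_rect (b : nat -> nat) (s : nat -> nat -> nat -> nat) :
  rec1 b -> rec3 s -> rec2 (fun x y => nat_rect (fun _ => nat) (b y) (fun i z => s i z y) x).
Proof.
  intros Hb Hs. eapply recursive_ext; [|exact (recursive_rect 1 _ _ Hb Hs)].
  intros [|x [|y [|]]] Hv; simpl in Hv; try lia. reflexivity.
Qed.

Lemma rec1_rect (b : nat) (s : nat -> nat -> nat) :
  rec2 s -> rec1 (fun x => nat_rect (fun _ => nat) b (fun i z => s i z) x).
Proof.
  intros Hs.
  pose proof (rec2_rect (fun _ => b) (fun i z _ => s i z) (rec1_const b)
                (rec3_comp2 _ _ _ rec3_fst rec3_snd Hs)) as H.
  exact (rec1_comp2 _ _ _ rec1_id (rec1_const 0) H).
Qed.

Lemma rec2_add : rec2 Nat.add.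
Proof.
  eapply rec2_ext; [|exact (rec2_rect (fun y => y) (fun i z y => S z) rec1_id
                              (rec3_comp1 _ _ rec3_snd rec1_succ))].
  intros x y. induction x; simpl; auto.
Qed.

Lemma rec2_mul : rec2 Nat.mul.
Proof.
  eapply rec2_ext; [|exact (rec2_rect (fun y => 0) (fun i z y => z + y) (rec1_const 0)
                              (rec3_comp2 _ _ _ rec3_snd rec3_thd rec2_add))].
  intros x y. induction x as [|x IH]; simpl; lia.
Qed.

Lemma rec1_pred : rec1 Nat.pred.
Proof. eapply rec1_ext; [|exact (rec1_rect 0 _ rec2_fst)]. now intros []. Qed.

Lemma rec2_swap h : rec2 h -> rec2 (fun x y => h y x).
Proof. exact (rec2_comp2 _ _ _ rec2_snd rec2_fst). Qed.

Lemma rec2_sub : rec2 Nat.sub.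
Proof.
  pose proof (rec2_rect (fun x => x) (fun i z x => Nat.pred z) rec1_id
                (rec3_comp1 _ _ rec3_snd rec1_pred)) as H.
  eapply rec2_ext; [|exact (rec2_swap _ H)].
  intros x y. simpl. induction y as [|y IH]; simpl; lia.
Qed.

Definition sg (x : nat) : nat := if x =? 0 then 0 else 1.
Definition ifz (a b c : nat) : nat := if a =? 0 then b else c.

Lemma rec1_sg : rec1 sg.
Proof. eapply rec1_ext; [|exact (rec1_rect 0 _ (rec2_const 1))]. now intros []. Qed.

Lemma rec3_ifz : rec3 ifz.
Proof.
  assert (H : rec3 (fun a b c => (1 - sg a) * b + sg a * c)).
  { pose proof (rec3_comp1 _ _ rec3_fst rec1_sg) as Hsg.
    exact (rec3_comp2 _ _ _
             (rec3_comp2 _ _ _ (rec3_comp2 _ _ _ (rec3_const 1) Hsg rec2_sub) rec3_snd rec2_mul)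
             (rec3_comp2 _ _ _ Hsg rec3_thd rec2_mul) rec2_add). }
  eapply rec3_ext; [|exact H]. intros [|a] b c; unfold ifz, sg; simpl; lia.
Qed.

Lemma rec2_ltb : rec2 (fun x y => Nat.b2n (x <? y)).
Proof.
  eapply rec2_ext; [|exact (rec2_comp1 _ _ (rec2_swap _ rec2_sub) rec1_sg)].
  intros x y. unfold sg. destruct (x <? y) eqn:E.
  - apply Nat.ltb_lt in E. destruct (y - x) eqn:E2; simpl; lia.
  - apply Nat.ltb_ge in E. now replace (y - x) with 0 by lia.
Qed.

Lemma rec2_eqb : rec2 (fun x y => Nat.b2n (x =? y)).
Proof.
  assert (H : rec2 (fun x y => 1 - sg ((x - y) + (y - x)))).
  { exact (rec2_comp2 _ _ _ (rec2_const 1)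
             (rec2_comp1 _ _ (rec2_comp2 _ _ _ rec2_sub (rec2_swap _ rec2_sub) rec2_add) rec1_sg)
             rec2_sub). }
  eapply rec2_ext; [|exact H]. intros x y. unfold sg.
  destruct (x =? y) eqn:E.
  - apply Nat.eqb_eq in E. subst. now rewrite Nat.sub_diag.
  - apply Nat.eqb_neq in E. destruct (x - y + (y - x)) eqn:E2; simpl; lia.
Qed.

Lemma rec1_odd : rec1 (fun x => Nat.b2n (Nat.odd x)).
Proof.
  eapply rec1_ext;
    [|exact (rec1_rect 0 _ (rec2_comp2 _ _ _ (rec2_const 1) rec2_snd rec2_sub))].
  intros x. induction x as [|x IH]; [reflexivity|]. cbn [nat_rect] in *. rewrite IH.
  rewrite Nat.odd_succ, <- Nat.negb_odd. now destruct (Nat.odd x).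
Qed.

Lemma rec1_div2 : rec1 Nat.div2.
Proof.
  pose proof (rec2_comp2 _ _ _ rec2_snd (rec2_comp1 _ _ rec2_fst rec1_odd) rec2_add) as Hstep.
  eapply rec1_ext; [|exact (rec1_rect 0 (fun i z => z + Nat.b2n (Nat.odd i)) Hstep)].
  intros x. induction x as [|x IH]; [reflexivity|]. cbn [nat_rect] in *. rewrite IH.
  pose proof (Nat.div2_odd x). pose proof (Nat.div2_odd (S x)).
  rewrite Nat.odd_succ, <- Nat.negb_odd in *. destruct (Nat.odd x); simpl in *; lia.
Qed.

End Recursive_functions.

(** * Codes of pairs, situations and rationals *)

Section Codes.
Local Open Scope nat_scope.

Fixpoint triangle (n : nat) : nat :=
  match n with 0 => 0 | S i => triangle i + S i end.

Fixpoint triangles_below (z m : nat) : nat :=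
  match m with 0 => 0 | S i => triangles_below z i + Nat.b2n (triangle (S i) <=? z) end.

(* The largest [t] with [triangle t <= z], that is [x + y] when [z = npair x y]. *)
Definition unpair_sum (z : nat) : nat := triangles_below z z.
Definition unpair2 (z : nat) : nat := z - triangle (unpair_sum z).
Definition unpair1 (z : nat) : nat := unpair_sum z - unpair2 z.

Lemma triangle_mono a b : a <= b -> triangle a <= triangle b.
Proof. induction 1; simpl; lia. Qed.

Lemma le_triangle n : n <= triangle n.
Proof. induction n; simpl; lia. Qed.

Lemma npair_triangle x y : npair x y = triangle (x + y) + y.
Proof.
  assert (H : 2 * triangle (x + y) = (x + y) * (x + y + 1)) by (induction (x + y); simpl; lia).
  unfold npair. rewrite <- H, Nat.mul_comm, Nat.div_mul; lia.
Qed.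

Lemma triangles_below_spec z t m :
  triangle t <= z < triangle (S t) -> triangles_below z m = Nat.min m t.
Proof.
  intros [H1 H2]. induction m as [|m IH]; [simpl; lia|]. cbn [triangles_below]. rewrite IH.
  destruct (triangle (S m) <=? z) eqn:E; cbn [Nat.b2n].
  - apply Nat.leb_le in E.
    destruct (Nat.lt_ge_cases m t); [lia|].
    pose proof (triangle_mono (S t) (S m) ltac:(lia)). lia.
  - apply Nat.leb_gt in E.
    destruct (Nat.lt_ge_cases m t); [|lia].
    pose proof (triangle_mono (S m) t ltac:(lia)). lia.
Qed.

Lemma unpair_npair x y : unpair1 (npair x y) = x /\ unpair2 (npair x y) = y.
Proof.
  rewrite npair_triangle.
  assert (Hs : unpair_sum (triangle (x + y) + y) = x + y).
  { unfold unpair_sum. rewrite (triangles_below_spec _ (x + y)) by (simpl; lia).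
    pose proof (le_triangle (x + y)). lia. }
  unfold unpair1, unpair2. rewrite Hs. lia.
Qed.

Lemma unpair1_npair x y : unpair1 (npair x y) = x.
Proof. apply unpair_npair. Qed.
Lemma unpair2_npair x y : unpair2 (npair x y) = y.
Proof. apply unpair_npair. Qed.

Lemma npair_surj z : exists x y, npair x y = z.
Proof.
  induction z as [|z [x [y H]]]; [now exists 0, 0|]. rewrite npair_triangle in H.
  destruct x as [|x].
  - exists (S y), 0. rewrite npair_triangle, !Nat.add_0_r. simpl in *. lia.
  - exists x, (S y). rewrite npair_triangle. replace (x + S y) with (S x + y); lia.
Qed.

Lemma npair_unpair z : npair (unpair1 z) (unpair2 z) = z.
Proof.
  destruct (npair_surj z) as [x [y <-]]. now destruct (unpair_npair x y) as [-> ->].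
Qed.

Lemma npair_inj x y x' y' : npair x y = npair x' y' -> x = x' /\ y = y'.
Proof.
  intros H. destruct (unpair_npair x y) as [A B], (unpair_npair x' y') as [C D].
  rewrite H in A, B. split; congruence.
Qed.

Lemma rec1_triangle : rec1 triangle.
Proof.
  pose proof (rec2_comp2 _ _ _ rec2_snd (rec2_comp1 _ _ rec2_fst rec1_succ) rec2_add) as Hstep.
  eapply rec1_ext; [|exact (rec1_rect 0 (fun i z => z + S i) Hstep)].
  intros x. induction x as [|x IH]; [reflexivity|]. cbn [nat_rect]. now rewrite IH.
Qed.

Lemma rec2_npair : rec2 npair.
Proof.
  eapply rec2_ext;
    [|exact (rec2_comp2 _ _ _ (rec2_comp1 _ _ rec2_add rec1_triangle) rec2_snd rec2_add)].
  intros. now rewrite npair_triangle.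
Qed.

Lemma rec1_unpair_sum : rec1 unpair_sum.
Proof.
  pose proof (rec2_comp2 _ _ _ rec2_fst (rec2_comp1 _ _ rec2_snd rec1_succ) rec2_ltb) as Hleb.
  assert (H : rec2 (fun m z => nat_rect (fun _ => nat) 0
                                 (fun i c => c + Nat.b2n (triangle (S i) <=? z)) m)).
  { apply rec2_rect; [apply rec1_const|].
    exact (rec3_comp2 _ _ _ rec3_snd
             (rec3_comp2 _ _ _ (rec3_comp1 _ _ rec3_fst (rec1_comp1 _ _ rec1_succ rec1_triangle))
                rec3_thd Hleb) rec2_add). }
  eapply rec1_ext; [|exact (rec1_comp2 _ _ _ rec1_id rec1_id H)].
  intros z. unfold unpair_sum. cbv beta.
  assert (E : forall m, nat_rect (fun _ => nat) 0
                          (fun i c => c + Nat.b2n (triangle (S i) <=? z)) m = triangles_below z m).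
  { induction m as [|m IH]; [reflexivity|]. cbn [nat_rect triangles_below]. now rewrite IH. }
  apply E.
Qed.

Lemma rec1_unpair2 : rec1 unpair2.
Proof.
  exact (rec1_comp2 _ _ _ rec1_id (rec1_comp1 _ _ rec1_unpair_sum rec1_triangle) rec2_sub).
Qed.

Lemma rec1_unpair1 : rec1 unpair1.
Proof. exact (rec1_comp2 _ _ _ rec1_unpair_sum rec1_unpair2 rec2_sub). Qed.

Lemma enc_sit_inj s t : enc_sit s = enc_sit t -> s = t.
Proof.
  revert t. induction s as [|b s IH]; intros [|b' t]; simpl; intros H;
    try (destruct b; lia); try (destruct b'; lia); auto.
  destruct b, b'; try lia; f_equal; apply IH; lia.
Qed.

Lemma enc_sit_surj n : exists s, enc_sit s = n.
Proof.
  induction n as [n IH] using lt_wf_ind. destruct n as [|n]; [now exists []|].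
  destruct (Nat.Even_or_Odd n) as [[m Hm]|[m Hm]];
    destruct (IH m ltac:(lia)) as [s Hs]; [exists (false :: s)|exists (true :: s)]; simpl; lia.
Qed.

Definition dec_sit (m : nat) : list bool :=
  proj1_sig (constructive_indefinite_description _ (enc_sit_surj m)).

Lemma enc_dec_sit m : enc_sit (dec_sit m) = m.
Proof. unfold dec_sit. now destruct (constructive_indefinite_description _ _). Qed.

Lemma dec_enc_sit s : dec_sit (enc_sit s) = s.
Proof. apply enc_sit_inj, enc_dec_sit. Qed.

Lemma enc_sit_snoc s b :
  enc_sit (s ++ [b]) = enc_sit s + (if b then 2 else 1) * 2 ^ length s.
Proof.
  induction s as [|a s IH]; simpl; [now destruct b|]. rewrite IH. destruct a, b; simpl; lia.
Qed.

Lemma length_le_enc_sit s : length s <= enc_sit s.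
Proof. induction s as [|[] s IH]; simpl; lia. Qed.

Definition triple a b c := npair a (npair b c).
Definition triple1 x := unpair1 x.
Definition triple2 x := unpair1 (unpair2 x).
Definition triple3 x := unpair2 (unpair2 x).

Lemma triple1_triple a b c : triple1 (triple a b c) = a.
Proof. apply unpair1_npair. Qed.
Lemma triple2_triple a b c : triple2 (triple a b c) = b.
Proof. unfold triple2, triple. now rewrite unpair2_npair, unpair1_npair. Qed.
Lemma triple3_triple a b c : triple3 (triple a b c) = c.
Proof. unfold triple3, triple. now rewrite !unpair2_npair. Qed.

Lemma rec1_triple f g h : rec1 f -> rec1 g -> rec1 h -> rec1 (fun x => triple (f x) (g x) (h x)).
Proof.
  intros Hf Hg Hh. exact (rec1_comp2 _ _ _ Hf (rec1_comp2 _ _ _ Hg Hh rec2_npair) rec2_npair).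
Qed.

Lemma rec3_triple f g h : rec3 f -> rec3 g -> rec3 h ->
  rec3 (fun x y z => triple (f x y z) (g x y z) (h x y z)).
Proof.
  intros Hf Hg Hh. exact (rec3_comp2 _ _ _ Hf (rec3_comp2 _ _ _ Hg Hh rec2_npair) rec2_npair).
Qed.

Lemma rec1_triple1 : rec1 triple1.
Proof. exact rec1_unpair1. Qed.
Lemma rec1_triple2 : rec1 triple2.
Proof. exact (rec1_comp1 _ _ rec1_unpair2 rec1_unpair1). Qed.
Lemma rec1_triple3 : rec1 triple3.
Proof. exact (rec1_comp1 _ _ rec1_unpair2 rec1_unpair2). Qed.

Definition quad a b c d := npair a (npair b (npair c d)).
Definition quad1 x := unpair1 x.
Definition quad2 x := unpair1 (unpair2 x).
Definition quad3 x := unpair1 (unpair2 (unpair2 x)).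
Definition quad4 x := unpair2 (unpair2 (unpair2 x)).

Lemma quad_proj a b c d :
  quad1 (quad a b c d) = a /\ quad2 (quad a b c d) = b /\
  quad3 (quad a b c d) = c /\ quad4 (quad a b c d) = d.
Proof.
  unfold quad, quad1, quad2, quad3, quad4.
  destruct (unpair_npair a (npair b (npair c d))) as [-> ->].
  destruct (unpair_npair b (npair c d)) as [-> ->].
  now destruct (unpair_npair c d) as [-> ->].
Qed.

Lemma rec1_quad f g h k :
  rec1 f -> rec1 g -> rec1 h -> rec1 k -> rec1 (fun x => quad (f x) (g x) (h x) (k x)).
Proof.
  intros Hf Hg Hh Hk.
  exact (rec1_comp2 _ _ _ Hf (rec1_comp2 _ _ _ Hg (rec1_comp2 _ _ _ Hh Hk rec2_npair) rec2_npair)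
           rec2_npair).
Qed.

Lemma rec1_quad1 : rec1 quad1.
Proof. exact rec1_unpair1. Qed.
Lemma rec1_quad2 : rec1 quad2.
Proof. exact (rec1_comp1 _ _ rec1_unpair2 rec1_unpair1). Qed.
Lemma rec1_quad3 : rec1 quad3.
Proof. exact (rec1_comp1 _ _ (rec1_comp1 _ _ rec1_unpair2 rec1_unpair2) rec1_unpair1). Qed.
Lemma rec1_quad4 : rec1 quad4.
Proof. exact (rec1_comp1 _ _ (rec1_comp1 _ _ rec1_unpair2 rec1_unpair2) rec1_unpair2). Qed.

Fixpoint sit_fold (U : nat -> nat -> nat -> nat) (pre s : list bool) (u : nat) : nat :=
  match s with
  | [] => u
  | b :: s' => sit_fold U (pre ++ [b]) s' (U u (enc_sit pre) (Nat.b2n b))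
  end.

Lemma sit_fold_snoc U pre s x u :
  sit_fold U pre (s ++ [x]) u = U (sit_fold U pre s u) (enc_sit (pre ++ s)) (Nat.b2n x).
Proof.
  revert pre u. induction s as [|b s IH]; intros pre u; simpl.
  - now rewrite app_nil_r.
  - now rewrite IH, <- app_assoc.
Qed.

(* A state [quad r p 2^|pre| u] records the code [r] of the unread suffix, the code [p] of
   the read prefix [pre] and the fold value [u]; the next bit is the lowest bijective
   binary digit [2 - odd r] of [r]. *)
Definition fold_step (U : nat -> nat -> nat -> nat) (x : nat) : nat :=
  let d := 2 - Nat.b2n (Nat.odd (quad1 x)) in
  ifz (quad1 x) x
    (quad (Nat.div2 (quad1 x - d)) (quad2 x + d * quad3 x) (quad3 x + quad3 x)
       (U (quad4 x) (quad2 x) (1 - Nat.b2n (Nat.odd (quad1 x))))).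

Definition fold_code (U : nat -> nat -> nat -> nat) (u0 e : nat) : nat :=
  quad4 (Nat.iter e (fold_step U) (quad e 0 1 u0)).

Lemma fold_step_cons U b s pre u :
  fold_step U (quad (enc_sit (b :: s)) (enc_sit pre) (2 ^ length pre) u) =
  quad (enc_sit s) (enc_sit (pre ++ [b])) (2 ^ length (pre ++ [b])) (U u (enc_sit pre) (Nat.b2n b)).
Proof.
  unfold fold_step. destruct (quad_proj (enc_sit (b :: s)) (enc_sit pre) (2 ^ length pre) u)
    as [-> [-> [-> ->]]].
  rewrite enc_sit_snoc, length_app, Nat.pow_add_r, Nat.pow_1_r. cbn [enc_sit].
  assert (Hodd : forall n, Nat.odd (2 * n + 2) = false /\ Nat.odd (2 * n + 1) = true).
  { intros n. rewrite Nat.add_comm, Nat.odd_add_mul_2, (Nat.add_comm _ 1), Nat.odd_add_mul_2.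
    split; reflexivity. }
  destruct (Hodd (enc_sit s)) as [E2 E1]. unfold ifz.
  destruct b; [rewrite E2|rewrite E1]; simpl Nat.b2n;
    rewrite (proj2 (Nat.eqb_neq _ 0)) by lia;
    [replace (2 * enc_sit s + 2 - (2 - 0)) with (2 * enc_sit s) by lia
    |replace (2 * enc_sit s + 1 - (2 - 1)) with (2 * enc_sit s) by lia];
    rewrite Nat.div2_double; f_equal; lia.
Qed.

Lemma fold_code_enc U u0 s : fold_code U u0 (enc_sit s) = sit_fold U [] s u0.
Proof.
  assert (Hrun : forall t pre u,
    Nat.iter (length t) (fold_step U) (quad (enc_sit t) (enc_sit pre) (2 ^ length pre) u) =
    quad 0 (enc_sit (pre ++ t)) (2 ^ length (pre ++ t)) (sit_fold U pre t u)).
  { induction t as [|b t IH]; intros pre u; [simpl; now rewrite app_nil_r|].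
    cbn [length]. rewrite Nat.iter_succ_r, fold_step_cons, IH, <- app_assoc. reflexivity. }
  assert (Hstop : forall k x, quad1 x = 0 -> Nat.iter k (fold_step U) x = x).
  { intros k x Hx. induction k as [|k IH]; [reflexivity|].
    simpl. rewrite IH. unfold fold_step, ifz. now rewrite Hx. }
  unfold fold_code.
  assert (Hsplit : forall x, Nat.iter (enc_sit s) (fold_step U) x =
            Nat.iter (enc_sit s - length s) (fold_step U) (Nat.iter (length s) (fold_step U) x)).
  { intros x. rewrite <- Nat.iter_add. f_equal. pose proof (length_le_enc_sit s). lia. }
  rewrite Hsplit. change (quad (enc_sit s) 0 1 u0)
    with (quad (enc_sit s) (enc_sit []) (2 ^ length (@nil bool)) u0).
  rewrite Hrun, Hstop; apply quad_proj.
Qed.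

Lemma rec1_fold_code U u0 : rec3 U -> rec1 (fold_code U u0).
Proof.
  intros HU.
  assert (Hodd := rec1_comp1 _ _ rec1_quad1 rec1_odd).
  assert (Hd := rec1_comp2 _ _ _ (rec1_const 2) Hodd rec2_sub).
  assert (Hstep : rec1 (fold_step U)).
  { apply (rec1_comp3 _ _ _ _ rec1_quad1 rec1_id); [|exact rec3_ifz].
    apply rec1_quad.
    - exact (rec1_comp1 _ _ (rec1_comp2 _ _ _ rec1_quad1 Hd rec2_sub) rec1_div2).
    - exact (rec1_comp2 _ _ _ rec1_quad2 (rec1_comp2 _ _ _ Hd rec1_quad3 rec2_mul) rec2_add).
    - exact (rec1_comp2 _ _ _ rec1_quad3 rec1_quad3 rec2_add).
    - exact (rec1_comp3 _ _ _ _ rec1_quad4 rec1_quad2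
               (rec1_comp2 _ _ _ (rec1_const 1) Hodd rec2_sub) HU). }
  assert (Hiter : rec2 (fun j e =>
            nat_rect (fun _ => nat) (quad e 0 1 u0) (fun i z => fold_step U z) j)).
  { apply rec2_rect; [|exact (rec3_comp1 _ _ rec3_snd Hstep)].
    exact (rec1_quad _ _ _ _ rec1_id (rec1_const 0) (rec1_const 1) (rec1_const u0)). }
  eapply rec1_ext; [|exact (rec1_comp1 _ _ (rec1_comp2 _ _ _ rec1_id rec1_id Hiter) rec1_quad4)].
  reflexivity.
Qed.

End Codes.

Definition qval (y : nat) : R := (INR (triple1 y) - INR (triple2 y)) / (INR (triple3 y) + 1).

Lemma recursive_rat_code (q : list bool -> nat -> R) : recursive_rat q ->
  exists g, rec1 g /\ forall d n, q d n = qval (g (npair (enc_sit d) n)).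
Proof.
  intros [c Hc].
  assert (H : forall x, exists y, eval c [x] y /\
                forall d n, x = npair (enc_sit d) n -> q d n = qval y).
  { intros x. destruct (npair_surj x) as [e [n0 <-]]. destruct (enc_sit_surj e) as [d0 <-].
    destruct (Hc d0 n0) as [a [b [k [He Hq]]]].
    exists (triple a b k). split; [exact He|].
    intros d n Heq. apply npair_inj in Heq as [E1 <-]. apply enc_sit_inj in E1 as <-.
    unfold qval. now rewrite triple1_triple, triple2_triple, triple3_triple. }
  exists (fun x => proj1_sig (constructive_indefinite_description _ (H x))). split.
  - exists c. intros [|x [|]] Hv; simpl in Hv |- *; try lia.
    destruct (constructive_indefinite_description _ (H x)) as [y [Hy Hq]]. exact Hy.
  - intros d n. destruct (constructive_indefinite_description _ (H (npair (enc_sit d) n)))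
      as [y [He Hy]]. now apply Hy.
Qed.

Lemma computable_code (phi : list bool -> R) : computable phi ->
  exists g, rec1 g /\
    forall d n, Rabs (phi d - qval (g (npair (enc_sit d) n))) < (/ 2) ^ n.
Proof.
  intros [q [Hq Hb]]. destruct (recursive_rat_code q Hq) as [g [Hg Hgq]].
  exists g. split; [exact Hg|]. intros d n. rewrite <- Hgq. apply Hb.
Qed.

Lemma recursive_rat_of_code (q : list bool -> nat -> R) (F : nat -> nat) :
  rec1 F -> (forall d n, q d n = qval (F (npair (enc_sit d) n))) -> recursive_rat q.
Proof.
  intros [c Hc] HF. exists c. intros d n. set (y := F (npair (enc_sit d) n)).
  exists (triple1 y), (triple2 y), (triple3 y). split; [|apply HF].
  unfold triple1, triple2, triple3. rewrite !npair_unpair. now apply (Hc [npair (enc_sit d) n]).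
Qed.

Definition qdiv_nat (M y : nat) : nat := triple (triple1 y) (triple2 y) ((triple3 y + 1) * M - 1).

Lemma qval_qdiv_nat M y : (0 < M)%nat -> qval (qdiv_nat M y) = qval y / INR M.
Proof.
  intros HM. unfold qval, qdiv_nat. rewrite triple1_triple, triple2_triple, triple3_triple.
  assert (1 <= (triple3 y + 1) * M)%nat by (apply (Nat.mul_le_mono 1 _ 1); lia).
  rewrite minus_INR, mult_INR, plus_INR by assumption. simpl INR.
  pose proof (pos_INR (triple3 y)). pose proof (lt_0_INR _ HM). field. repeat split; nra.
Qed.

Lemma rec1_qdiv_nat M : rec1 (qdiv_nat M).
Proof.
  exact (rec1_triple _ _ _ rec1_triple1 rec1_triple2
    (rec1_comp2 _ _ _ (rec1_comp2 _ _ _ (rec1_comp2 _ _ _ rec1_triple3 (rec1_const 1) rec2_add)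
       (rec1_const M) rec2_mul) (rec1_const 1) rec2_sub)).
Qed.

Lemma Un_cv_const c : Un_cv (fun _ => c) c.
Proof. intros e He. exists 0%nat. intros. unfold R_dist. now rewrite Rminus_diag, Rabs_R0. Qed.

Lemma lower_semicomputable_exact (f : list bool -> R) :
  recursive_rat (fun d _ => f d) -> lower_semicomputable f.
Proof.
  intros Hf. exists (fun d _ => f d). repeat split; [exact Hf|intros; lra|].
  intros d. apply Un_cv_const.
Qed.

Lemma Rdiv_lt_cross X K Y Q : 0 < K -> 0 < Q -> (X * Q < Y * K <-> X / K < Y / Q).
Proof.
  intros HK HQ.
  replace (X * Q) with (X / K * (K * Q)) by (field; lra).
  replace (Y * K) with (Y / Q * (K * Q)) by (field; lra).
  split; intros H; [apply Rmult_lt_reg_r in H|apply Rmult_lt_compat_r]; nra.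
Qed.

Definition qlt (y z : nat) : bool :=
  (triple1 y * (triple3 z + 1) + triple2 z * (triple3 y + 1) <?
   triple1 z * (triple3 y + 1) + triple2 y * (triple3 z + 1))%nat.

Lemma qlt_spec y z : qlt y z = true <-> qval y < qval z.
Proof.
  unfold qlt, qval. rewrite Nat.ltb_lt, <- Rdiv_lt_cross
    by (pose proof (pos_INR (triple3 y)); pose proof (pos_INR (triple3 z)); lra).
  split; intros H; [apply lt_INR in H|apply INR_lt];
    rewrite ?plus_INR, ?mult_INR, ?plus_INR in *; simpl INR in *; lra.
Qed.

Lemma rec2_qlt : rec2 (fun y z => Nat.b2n (qlt y z)).
Proof.
  pose proof (rec2_comp1 _ _ rec2_fst rec1_triple1) as Y1.
  pose proof (rec2_comp1 _ _ rec2_fst rec1_triple2) as Y2.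
  pose proof (rec2_comp2 _ _ _ (rec2_comp1 _ _ rec2_fst rec1_triple3) (rec2_const 1) rec2_add)
    as Y3.
  pose proof (rec2_comp1 _ _ rec2_snd rec1_triple1) as Z1.
  pose proof (rec2_comp1 _ _ rec2_snd rec1_triple2) as Z2.
  pose proof (rec2_comp2 _ _ _ (rec2_comp1 _ _ rec2_snd rec1_triple3) (rec2_const 1) rec2_add)
    as Z3.
  eapply rec2_ext; [|exact (rec2_comp2 _ _ _
    (rec2_comp2 _ _ _ (rec2_comp2 _ _ _ Y1 Z3 rec2_mul) (rec2_comp2 _ _ _ Z2 Y3 rec2_mul) rec2_add)
    (rec2_comp2 _ _ _ (rec2_comp2 _ _ _ Z1 Y3 rec2_mul) (rec2_comp2 _ _ _ Y2 Z3 rec2_mul) rec2_add)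
    rec2_ltb)].
  reflexivity.
Qed.

Lemma exists_ratio_between x y :
  0 <= x -> x < y -> exists P Q : nat, (0 < Q)%nat /\ x < INR P / INR Q < y.
Proof.
  intros Hx Hxy. destruct (INR_archimed (y - x) 1 ltac:(lra)) as [Q HQ].
  assert (HQ0 : 0 < INR Q) by nra. assert (HQn : (0 < Q)%nat) by (apply INR_lt; simpl; lra).
  destruct (archimed (x * INR Q)) as [H1 H2].
  assert (Hz : (0 <= up (x * INR Q))%Z) by (apply le_IZR; nra).
  exists (Z.to_nat (up (x * INR Q))), Q. split; [exact HQn|].
  rewrite INR_IZR_INZ, Znat.Z2Nat.id by exact Hz.
  split; apply (Rmult_lt_reg_r (INR Q)); auto; unfold Rdiv;
    rewrite Rmult_assoc, Rinv_l, Rmult_1_r by lra; nra.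
Qed.

Lemma exists_qval_between x y : x < y -> exists z, x < qval z < y.
Proof.
  intros Hxy. unfold qval.
  destruct (Rle_lt_dec 0 x) as [Hx|Hx]; [|destruct (Rle_lt_dec y 0) as [Hy|Hy]].
  - destruct (exists_ratio_between x y Hx Hxy) as [P [[|Q] [HQ HPQ]]]; [lia|].
    exists (triple P 0 Q). rewrite triple1_triple, triple2_triple, triple3_triple.
    replace (INR P - INR 0) with (INR P) by (simpl; ring). now rewrite <- S_INR.
  - destruct (exists_ratio_between (- y) (- x) ltac:(lra) ltac:(lra)) as [P [[|Q] [HQ HPQ]]];
      [lia|].
    exists (triple 0 P Q). rewrite triple1_triple, triple2_triple, triple3_triple.
    replace (INR 0 - INR P) with (- INR P) by (simpl; ring). rewrite <- S_INR.
    unfold Rdiv in *. lra.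
  - exists (triple 0 0 0). rewrite triple1_triple, triple2_triple, triple3_triple. simpl. lra.
Qed.

Definition flip_prob (flip : bool) (p : R) : R := if flip then 1 - p else p.

(* Comparing an approximation of precision [e / 2] with a rational within [e / 2] of
   [theta] decides [flip_prob flip (phi s) < theta] up to an error [e]. *)
Lemma computable_decider phi (flip : bool) theta e : computable phi -> 0 < e ->
  exists D : nat -> bool, rec1 (fun p => Nat.b2n (D p)) /\
    (forall s, D (enc_sit s) = true -> flip_prob flip (phi s) < theta + e) /\
    (forall s, flip_prob flip (phi s) < theta - e -> D (enc_sit s) = true).
Proof.
  intros Hc He. destruct (computable_code phi Hc) as [g [Hg Happrox]].
  destruct (pow_lt_1_zero (/ 2) ltac:(rewrite Rabs_pos_eq; lra) (e / 2) ltac:(lra)) as [E HE].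
  specialize (HE E (le_n E)). rewrite Rabs_pos_eq in HE by (apply pow_le; lra).
  set (approx := fun p => g (npair p E)).
  assert (Hgp : rec1 approx)
    by exact (rec1_comp1 _ _ (rec1_comp2 _ _ _ rec1_id (rec1_const E) rec2_npair) Hg).
  assert (Hclose : forall s, Rabs (phi s - qval (approx (enc_sit s))) < e / 2)
    by (intros s; specialize (Happrox s E); unfold approx; lra).
  destruct (exists_qval_between (flip_prob flip theta - e / 2) (flip_prob flip theta))
    as [z Hz]; [lra|].
  destruct flip; unfold flip_prob in *.
  - exists (fun p => qlt z (approx p)). split.
    + exact (rec1_comp2 _ _ _ (rec1_const z) Hgp rec2_qlt).
    + split; intros s Hs; [apply qlt_spec in Hs|apply qlt_spec];
        specialize (Hclose s); apply Rabs_def2 in Hclose; lra.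
  - exists (fun p => qlt (approx p) z). split.
    + exact (rec1_comp2 _ _ _ Hgp (rec1_const z) rec2_qlt).
    + split; intros s Hs; [apply qlt_spec in Hs|apply qlt_spec];
        specialize (Hclose s); apply Rabs_def2 in Hclose; lra.
Qed.

(** * Test supermartingales *)

Lemma upper_exp_ge a b f p :
  a <= p <= b -> p * f true + (1 - p) * f false <= upper_exp a b f.
Proof.
  intros [H1 H2]. unfold upper_exp.
  destruct (Rle_dec (f false) (f true));
    [eapply Rle_trans; [|apply Rmax_r]|eapply Rle_trans; [|apply Rmax_l]]; nra.
Qed.

Lemma upper_exp_le a b f B :
  a * f true + (1 - a) * f false <= B -> b * f true + (1 - b) * f false <= B ->
  upper_exp a b f <= B.
Proof. apply Rmax_lub. Qed.

Lemma upper_exp_point p f : upper_exp p p f = p * f true + (1 - p) * f false.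
Proof. apply Rmax_left. lra. Qed.

Lemma upper_exp_mono a b a' b' f :
  a' <= a -> a <= b -> b <= b' -> upper_exp a b f <= upper_exp a' b' f.
Proof. intros. apply upper_exp_le; apply upper_exp_ge; lra. Qed.

Lemma test_supermartingale_narrow a b a' b' T :
  a' <= a -> a <= b -> b <= b' ->
  test_supermartingale (fun _ => a') (fun _ => b') T ->
  test_supermartingale (fun _ => a) (fun _ => b) T.
Proof.
  intros H1 H2 H3 [T0 [Tp Ts]]. split; [|split]; auto. intros s.
  eapply Rle_trans; [|apply (Ts s)]. now apply upper_exp_mono.
Qed.

Lemma ML_random_I_widen a b a' b' w :
  a' <= a -> a <= b -> b <= b' -> ML_random_I a b w -> ML_random_I a' b' w.
Proof.
  intros H1 H2 H3 HR [T [HT1 [HT2 HT3]]]. apply HR.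
  exists T. split; [exact HT1|split; [|exact HT3]].
  exact (test_supermartingale_narrow a b a' b' T H1 H2 H3 HT2).
Qed.

Lemma test_supermartingale_of_factors lo hi T (F : list bool -> bool -> R) :
  T [] = 1 -> (forall s x, T (s ++ [x]) = T s * F s x) -> (forall s x, 0 <= F s x) ->
  (forall s, upper_exp (lo s) (hi s) (fun x => F s x - 1) <= 0) ->
  test_supermartingale lo hi T.
Proof.
  intros H0 HS HF HU.
  assert (Hp : forall s, 0 <= T s).
  { induction s as [|x s IH] using rev_ind; [lra|]. rewrite HS. now apply Rmult_le_pos. }
  split; [|split]; auto. intros s.
  replace (upper_exp _ _ _) with (T s * upper_exp (lo s) (hi s) (fun x => F s x - 1)).
  - specialize (HU s). specialize (Hp s). nra.
  - unfold upper_exp. rewrite !HS, <- RmaxRmult by apply Hp. f_equal; ring.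
Qed.

Lemma prefix_S w n : prefix w (S n) = prefix w n ++ [w n].
Proof. unfold prefix. now rewrite seq_S, map_app. Qed.

Lemma prefix_length w n : length (prefix w n) = n.
Proof. unfold prefix. now rewrite length_map, length_seq. Qed.

Definition unbounded (u : nat -> R) : Prop :=
  forall (M : R) (N : nat), exists n, (N <= n)%nat /\ M < u n.

Lemma unbounded_mul u v :
  (forall n, 0 <= u n) -> (forall n, 0 <= v n) ->
  unbounded (fun n => u n * v n) -> unbounded u \/ unbounded v.
Proof.
  intros Hu Hv Huv. apply NNPP. intros Hn. apply not_or_and in Hn as [Bu Bv].
  assert (Hbound : forall f, ~ unbounded f ->
            exists M N, forall n, (N <= n)%nat -> f n <= M).
  { intros f Hf. apply NNPP. intros Hn. apply Hf. intros M N.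
    apply NNPP. intros HMN. apply Hn. exists M, N. intros n HnN.
    apply Rnot_lt_le. intros Hlt. apply HMN. now exists n. }
  destruct (Hbound u Bu) as [M1 [N1 H1]], (Hbound v Bv) as [M2 [N2 H2]].
  destruct (Huv (M1 * M2) (N1 + N2)%nat) as [n [Hn Hlt]].
  specialize (H1 n ltac:(lia)). specialize (H2 n ltac:(lia)).
  pose proof (Hu n). pose proof (Hv n).
  assert (u n * v n <= M1 * M2) by (apply Rmult_le_compat; lra). lra.
Qed.

Lemma unbounded_frequent_growth (u : nat -> R) (D : nat -> bool) eta :
  0 < eta -> u 0%nat = 1 ->
  (forall n, u (S n) = u n * (if D n then 1 + eta else 1)) ->
  (forall N, exists n, (N <= n)%nat /\ D n = true) ->
  unbounded u.
Proof.
  intros Heta H0 HS HD.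
  assert (Hmono : forall n m, (n <= m)%nat -> u n <= u m).
  { assert (Hpos : forall n, 1 <= u n)
      by (induction n; [lra|]; rewrite HS; destruct (D n); nra).
    induction 1 as [|m _ IH]; [lra|]. rewrite HS. pose proof (Hpos m). destruct (D m); nra. }
  assert (Hgrow : forall K, exists n, 1 + INR K * eta <= u n).
  { induction K as [|K [n Hn]]; [exists 0%nat; simpl; lra|].
    destruct (HD n) as [m [Hm HDm]]. exists (S m).
    rewrite HS, HDm, S_INR. pose proof (Hmono n m Hm). pose proof (pos_INR K). nra. }
  intros M N. destruct (INR_archimed eta M Heta) as [K HK]. destruct (Hgrow K) as [n Hn].
  exists (Nat.max n N). split; [lia|]. pose proof (Hmono n (Nat.max n N) ltac:(lia)). lra.
Qed.

Lemma not_random_of_product lo1 hi1 lo2 hi2 T1 T2 (D : list bool -> bool) w eta :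
  0 < eta ->
  lower_semicomputable T1 -> test_supermartingale lo1 hi1 T1 ->
  lower_semicomputable T2 -> test_supermartingale lo2 hi2 T2 ->
  (forall s x, T1 (s ++ [x]) * T2 (s ++ [x]) = T1 s * T2 s * (if D s then 1 + eta else 1)) ->
  (forall N, exists n, (N <= n)%nat /\ D (prefix w n) = true) ->
  ML_random lo1 hi1 w -> ML_random lo2 hi2 w -> False.
Proof.
  intros Heta HL1 HT1 HL2 HT2 HS HD HR1 HR2.
  destruct HT1 as [T10 [T1p T1s]], HT2 as [T20 [T2p T2s]].
  assert (Hprod : unbounded (fun n => T1 (prefix w n) * T2 (prefix w n))).
  { apply (unbounded_frequent_growth _ (fun n => D (prefix w n)) eta Heta); [|intros n|exact HD].
    - unfold prefix. simpl. rewrite T10, T20. ring.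
    - now rewrite prefix_S, HS. }
  destruct (unbounded_mul _ _ (fun n => T1p _) (fun n => T2p _) Hprod) as [U|U];
    [apply HR1; exists T1|apply HR2; exists T2]; repeat split; auto.
Qed.

(** * Frequent deviations of the forecasts *)

Section Bet.
Variable D : nat -> bool.
Variables n0 m0 n1 m1 : nat.

(* The state [npair num den] stands for the capital [num / den]. *)
Definition bet_update (u p b : nat) : nat :=
  if D p then npair (unpair1 u * ifz b n0 n1) (unpair2 u * ifz b m0 m1) else u.

Definition bet_state (s : list bool) : nat := sit_fold bet_update [] s (npair 1 1).

Definition bet (s : list bool) : R :=
  INR (unpair1 (bet_state s)) / INR (unpair2 (bet_state s)).

Lemma bet_nil : bet [] = 1.
Proof. unfold bet, bet_state. cbn [sit_fold]. rewrite unpair1_npair, unpair2_npair. simpl. lra. Qed.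

Hypotheses (m0_pos : (0 < m0)%nat) (m1_pos : (0 < m1)%nat).

Lemma bet_state_den_pos s : (0 < unpair2 (bet_state s))%nat.
Proof.
  induction s as [|x s IH] using rev_ind.
  - unfold bet_state. cbn [sit_fold]. rewrite unpair2_npair. lia.
  - unfold bet_state at 1. rewrite sit_fold_snoc. fold (bet_state s). unfold bet_update.
    destruct (D _); [|exact IH]. rewrite unpair2_npair. unfold ifz.
    destruct x; simpl; nia.
Qed.

Lemma bet_snoc s x :
  bet (s ++ [x]) = bet s *
    (if D (enc_sit s) then (if x then INR n1 / INR m1 else INR n0 / INR m0) else 1).
Proof.
  pose proof (lt_0_INR _ (bet_state_den_pos s)).
  unfold bet at 1, bet_state. rewrite sit_fold_snoc. cbn [app]. fold (bet_state s).
  unfold bet_update, bet. destruct (D (enc_sit s)); [|lra].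
  rewrite unpair1_npair, unpair2_npair.
  pose proof (lt_0_INR _ m0_pos). pose proof (lt_0_INR _ m1_pos).
  destruct x; cbn [Nat.b2n ifz Nat.eqb]; rewrite !mult_INR; field; lra.
Qed.

Lemma bet_lsc : rec1 (fun p => Nat.b2n (D p)) -> lower_semicomputable bet.
Proof.
  intros HD. apply lower_semicomputable_exact.
  set (st := fun x => fold_code bet_update (npair 1 1) (unpair1 x)).
  assert (Hupdate : rec3 bet_update).
  { eapply rec3_ext; [|apply (rec3_comp3 _ _ _ _ (rec3_comp1 _ _ rec3_snd HD) rec3_fst
      (rec3_comp2 _ _ _
         (rec3_comp2 _ _ _ (rec3_comp1 _ _ rec3_fst rec1_unpair1)
            (rec3_comp3 _ _ _ _ rec3_thd (rec3_const n0) (rec3_const n1) rec3_ifz) rec2_mul)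
         (rec3_comp2 _ _ _ (rec3_comp1 _ _ rec3_fst rec1_unpair2)
            (rec3_comp3 _ _ _ _ rec3_thd (rec3_const m0) (rec3_const m1) rec3_ifz) rec2_mul)
         rec2_npair) rec3_ifz)].
    intros u p b. unfold bet_update, ifz. now destruct (D p). }
  assert (Hst : rec1 st) by exact (rec1_comp1 _ _ rec1_unpair1 (rec1_fold_code _ _ Hupdate)).
  apply (recursive_rat_of_code _ (fun x => triple (unpair1 (st x)) 0 (unpair2 (st x) - 1))).
  - exact (rec1_triple _ _ _ (rec1_comp1 _ _ Hst rec1_unpair1) (rec1_const 0)
             (rec1_comp2 _ _ _ (rec1_comp1 _ _ Hst rec1_unpair2) (rec1_const 1) rec2_sub)).
  - intros d n. unfold qval, st. rewrite unpair1_npair, fold_code_enc.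
    fold (bet_state d). rewrite triple1_triple, triple2_triple, triple3_triple.
    pose proof (bet_state_den_pos d). unfold bet. rewrite minus_INR by lia. simpl. f_equal; lra.
Qed.

End Bet.

Definition fav (e : R) : R := 1 + e / 2.
Definition unf (e C : R) : R := 1 - e / 2 * (1 - C) / C.
Definition boost (e : R) : R := 1 + e * e / 8.

(* [unf e C] makes the factors [fav e] (outcome [flip]) and [unf e C] fair exactly at
   probability [C] of outcome [negb flip]; [boost e] is small enough that the reciprocal
   factors [boost e / bet_factor] lose on average once that probability is [<= C - e]. *)
Definition bet_factor (flip : bool) (e C : R) (x : bool) : R :=
  if xorb flip x then unf e C else fav e.

Lemma interval_bet_le0 flip e C p :
  0 < e -> 0 < C -> C <= flip_prob flip p ->
  p * (bet_factor flip e C true - 1) + (1 - p) * (bet_factor flip e C false - 1) <= 0.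
Proof.
  intros He HC Hp.
  assert (Hq : forall q, C <= q -> q * (unf e C - 1) + (1 - q) * (fav e - 1) <= 0).
  { intros q Hq. unfold unf, fav.
    replace (q * _ + _) with (e / 2 * (C - q) * / C) by (field; lra).
    assert (e / 2 * (C - q) <= 0) by nra. pose proof (Rinv_0_lt_compat C HC). nra. }
  unfold bet_factor, flip_prob in *. destruct flip; simpl.
  - pose proof (Hq (1 - p) Hp). nra.
  - exact (Hq p Hp).
Qed.

Lemma forecast_bet_le0 flip e C p :
  0 < e <= 1 / 8 -> 4 * e < C <= 1 -> 0 <= flip_prob flip p <= C - e ->
  p * (boost e / bet_factor flip e C true - 1) +
  (1 - p) * (boost e / bet_factor flip e C false - 1) <= 0.
Proof.
  intros He HC Hp.
  assert (Hq : forall q, 0 <= q <= C - e ->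
            q * (boost e / unf e C - 1) + (1 - q) * (boost e / fav e - 1) <= 0).
  { clear p Hp. intros p Hp. unfold boost, unf, fav.
    set (l := e / 2). set (m := l * (1 - C) / C).
    assert (Hm : C * m = l * (1 - C)) by (unfold m; field; lra).
    assert (Hl : l = e / 2) by reflexivity. clearbody l m.
    assert (Hm0 : 0 <= m <= 1 / 8).
    { assert (0 <= C * m <= C / 8) by (rewrite Hm; split; nra). split; nra. }
    assert (Hbound : 1 - m + p * (l + m) <= 1 - m + l - e * (l + m)).
    { assert (p * (l + m) <= (C - e) * (l + m)) by (apply Rmult_le_compat_r; lra). nra. }
    assert (Hkey : (1 + e * e / 8) * (1 - m + p * (l + m)) <= (1 - m) * (1 + l)).
    { set (Y := 1 - m + l - e * (l + m)) in *.
      assert (HY : Y <= 1 + l) by (unfold Y; nra).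
      assert ((1 + e * e / 8) * (1 - m + p * (l + m)) <= (1 + e * e / 8) * Y)
        by (apply Rmult_le_compat_l; nra).
      assert (e * e / 8 * Y <= e * e / 8 * (1 + l)) by (apply Rmult_le_compat_l; nra).
      assert (e * e * e <= e * e / 8) by nra.
      unfold Y in *. nra. }
    replace (p * _ + _) with
      (((1 + e * e / 8) * (1 - m + p * (l + m)) - (1 - m) * (1 + l)) * / ((1 - m) * (1 + l)))
      by (field; lra).
    assert (0 < / ((1 - m) * (1 + l))) by (apply Rinv_0_lt_compat; nra). nra. }
  unfold bet_factor, flip_prob in *. destruct flip; simpl.
  - pose proof (Hq (1 - p) Hp). nra.
  - exact (Hq p Hp).
Qed.

Definition bet_num (flip : bool) (E Pc Q : nat) (x : bool) : nat :=
  if xorb flip x then (2 * E * Pc + Pc - Q)%nat else (2 * E + 1)%nat.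
Definition bet_den (flip : bool) (E Pc : nat) (x : bool) : nat :=
  if xorb flip x then (2 * E * Pc)%nat else (2 * E)%nat.

Lemma bet_ratio flip E Pc Q x :
  (1 <= E)%nat -> (0 < Q)%nat -> (0 < Pc)%nat -> (Q <= 2 * E * Pc + Pc)%nat ->
  INR (bet_num flip E Pc Q x) / INR (bet_den flip E Pc x) =
  bet_factor flip (/ INR E) (INR Pc / INR Q) x.
Proof.
  intros HE HQ HPc HPQ. pose proof (lt_0_INR _ HE). pose proof (lt_0_INR _ HQ).
  pose proof (lt_0_INR _ HPc). unfold bet_num, bet_den, bet_factor, unf, fav.
  destruct (xorb flip x); [rewrite minus_INR by exact HPQ|];
    rewrite ?plus_INR, ?mult_INR; simpl INR; field; lra.
Qed.

Lemma boost_ratio E : (1 <= E)%nat -> INR (8 * E * E + 1) / INR (8 * E * E) = boost (/ INR E).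
Proof.
  intros HE. pose proof (lt_0_INR _ HE). unfold boost.
  rewrite ?plus_INR, ?mult_INR. simpl INR. field. lra.
Qed.

Lemma INR_ratio_div a b c d : (0 < b)%nat -> (0 < c)%nat -> (0 < d)%nat ->
  INR a / INR b / (INR c / INR d) = INR (a * d) / INR (b * c).
Proof.
  intros Hb Hc Hd. pose proof (lt_0_INR _ Hb). pose proof (lt_0_INR _ Hc).
  pose proof (lt_0_INR _ Hd). rewrite !mult_INR. field. lra.
Qed.

Section Bet_pair.
Variables (D : nat -> bool) (flip : bool) (E Pc Q : nat).
Hypotheses (HE : (8 <= E)%nat) (HQ : (0 < Q)%nat) (HPQ : (Pc <= Q)%nat)
  (H4 : (4 * Q < Pc * E)%nat).

Local Notation e := (/ INR E).
Local Notation C := (INR Pc / INR Q).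

Lemma bet_pair_constants : 0 < e <= 1 / 8 /\ 4 * e < C <= 1.
Proof.
  assert (HE8 : 8 <= INR E) by (replace 8 with (INR 8) by (simpl; lra); apply le_INR; lia).
  assert (HQr := lt_0_INR _ HQ).
  split; split.
  - apply Rinv_0_lt_compat. lra.
  - assert (/ INR E <= / 8) by (apply Rinv_le_contravar; lra). lra.
  - apply (Rdiv_lt_cross 4 (INR E) (INR Pc) (INR Q)); [lra|lra|].
    replace 4 with (INR 4) by (simpl; lra). rewrite <- !mult_INR. apply lt_INR. lia.
  - apply (Rmult_le_reg_r (INR Q)); [lra|]. unfold Rdiv.
    rewrite Rmult_assoc, Rinv_l, Rmult_1_r, Rmult_1_l by lra. apply le_INR. lia.
Qed.

Lemma bet_pair_ratio x :
  INR (bet_num flip E Pc Q x) / INR (bet_den flip E Pc x) = bet_factor flip e C x.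
Proof. apply bet_ratio; nia. Qed.

Lemma bet_num_pos x : (0 < bet_num flip E Pc Q x)%nat.
Proof. unfold bet_num. destruct (xorb flip x); nia. Qed.

Lemma bet_den_pos x : (0 < bet_den flip E Pc x)%nat.
Proof. unfold bet_den. destruct (xorb flip x); nia. Qed.

Lemma bet_factor_pos x : 0 < bet_factor flip e C x.
Proof.
  rewrite <- bet_pair_ratio. apply Rdiv_lt_0_compat; apply lt_0_INR.
  - apply bet_num_pos.
  - apply bet_den_pos.
Qed.

Definition interval_bet : list bool -> R :=
  bet D (bet_num flip E Pc Q false) (bet_den flip E Pc false)
        (bet_num flip E Pc Q true) (bet_den flip E Pc true).

Definition forecast_bet : list bool -> R :=
  bet D ((8 * E * E + 1) * bet_den flip E Pc false) (8 * E * E * bet_num flip E Pc Q false)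
        ((8 * E * E + 1) * bet_den flip E Pc true) (8 * E * E * bet_num flip E Pc Q true).

Lemma interval_bet_snoc s x :
  interval_bet (s ++ [x]) =
  interval_bet s * (if D (enc_sit s) then bet_factor flip e C x else 1).
Proof.
  unfold interval_bet. rewrite bet_snoc by apply bet_den_pos.
  now destruct (D _), x; rewrite ?bet_pair_ratio.
Qed.

Lemma forecast_bet_snoc s x :
  forecast_bet (s ++ [x]) =
  forecast_bet s * (if D (enc_sit s) then boost e / bet_factor flip e C x else 1).
Proof.
  pose proof bet_num_pos. pose proof bet_den_pos.
  unfold forecast_bet. rewrite bet_snoc by (apply Nat.mul_pos_pos; auto; lia).
  destruct (D _); [|reflexivity]. destruct x;
    rewrite <- INR_ratio_div, boost_ratio, bet_pair_ratio by (auto; lia); reflexivity.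
Qed.

Lemma interval_bet_test c d :
  C <= flip_prob flip c -> C <= flip_prob flip d ->
  test_supermartingale (fun _ => c) (fun _ => d) interval_bet.
Proof.
  intros Hc Hd. destruct bet_pair_constants as [He HC].
  apply (test_supermartingale_of_factors _ _ _
           (fun s x => if D (enc_sit s) then bet_factor flip e C x else 1));
    [apply bet_nil|exact interval_bet_snoc| |].
  - intros s x. destruct (D _); [apply Rlt_le, bet_factor_pos|lra].
  - intros s. destruct (D _); apply upper_exp_le; try lra; apply interval_bet_le0; lra.
Qed.

Lemma forecast_bet_test phi :
  forecasting_system phi phi ->
  (forall s, D (enc_sit s) = true -> flip_prob flip (phi s) <= C - e) ->
  test_supermartingale phi phi forecast_bet.
Proof.
  intros Hfs HDphi. destruct bet_pair_constants as [He HC].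
  apply (test_supermartingale_of_factors _ _ _
           (fun s x => if D (enc_sit s) then boost e / bet_factor flip e C x else 1));
    [apply bet_nil|exact forecast_bet_snoc| |].
  - intros s x. destruct (D _); [|lra].
    apply Rlt_le, Rdiv_lt_0_compat; [unfold boost; nra|apply bet_factor_pos].
  - intros s. rewrite upper_exp_point. destruct (D (enc_sit s)) eqn:HDs; [|lra].
    apply forecast_bet_le0; [lra|lra|]. split; [|exact (HDphi s HDs)].
    destruct (Hfs s). unfold flip_prob. destruct flip; lra.
Qed.

Lemma bet_pair_snoc s x :
  interval_bet (s ++ [x]) * forecast_bet (s ++ [x]) =
  interval_bet s * forecast_bet s * (if D (enc_sit s) then 1 + e * e / 8 else 1).
Proof.
  rewrite interval_bet_snoc, forecast_bet_snoc. destruct (D _); [|ring].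
  pose proof (bet_factor_pos x) as Hpos.
  unfold boost. field. split; [apply not_0_INR; lia|lra].
Qed.

Lemma bet_pair_lsc : rec1 (fun p => Nat.b2n (D p)) ->
  lower_semicomputable interval_bet /\ lower_semicomputable forecast_bet.
Proof.
  intros HD. pose proof bet_num_pos. pose proof bet_den_pos.
  split; apply bet_lsc; auto; apply Nat.mul_pos_pos; auto; lia.
Qed.

End Bet_pair.

(* The product of the two capitals grows by the factor [boost e] whenever [D] holds. *)
Lemma frequent_deviation_contradiction phi w (D : nat -> bool) (flip : bool) E Pc Q c d :
  forecasting_system phi phi -> rec1 (fun p => Nat.b2n (D p)) ->
  (8 <= E)%nat -> (0 < Q)%nat -> (Pc <= Q)%nat -> (4 * Q < Pc * E)%nat ->
  (forall s, D (enc_sit s) = true -> flip_prob flip (phi s) <= INR Pc / INR Q - / INR E) ->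
  (forall N, exists n, (N <= n)%nat /\ D (enc_sit (prefix w n)) = true) ->
  INR Pc / INR Q <= flip_prob flip c -> INR Pc / INR Q <= flip_prob flip d ->
  ML_random phi phi w -> ML_random_I c d w -> False.
Proof.
  intros Hfs HD HE HQ HPQ H4 HDphi Hfreq Hc Hd Hphi Hcd.
  destruct (bet_pair_constants E Pc Q HE HQ HPQ H4) as [He _].
  destruct (bet_pair_lsc D flip E Pc Q HE HQ HPQ H4 HD) as [HlscI HlscF].
  apply (not_random_of_product (fun _ => c) (fun _ => d) phi phi
           (interval_bet D flip E Pc Q) (forecast_bet D flip E Pc Q) (fun s => D (enc_sit s))
           w (/ INR E * / INR E / 8)); auto.
  - nra.
  - now apply interval_bet_test.
  - now apply forecast_bet_test.
  - intros s x. now apply bet_pair_snoc.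
Qed.

Lemma exists_inv_nat_lt eps : 0 < eps -> exists E : nat, (8 <= E)%nat /\ / INR E < eps.
Proof.
  intros Heps. destruct (INR_archimed eps 1 Heps) as [K HK].
  exists (Nat.max 8 K). split; [lia|].
  assert (HKE : INR K <= INR (Nat.max 8 K)) by (apply le_INR; lia).
  assert (H8 : 8 <= INR (Nat.max 8 K))
    by (replace 8 with (INR 8) by (simpl; lra); apply le_INR; lia).
  apply (Rmult_lt_reg_r (INR (Nat.max 8 K))); [lra|]. rewrite Rinv_l by lra. nra.
Qed.

Lemma frequent_deviation_not_random phi w (flip : bool) c d theta delta :
  forecasting_system phi phi -> computable phi -> ML_random phi phi w ->
  0 <= c -> c <= d -> d <= 1 -> ML_random_I c d w -> 0 < delta ->
  theta <= flip_prob flip c -> theta <= flip_prob flip d ->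
  (forall N, exists n, (N <= n)%nat /\ flip_prob flip (phi (prefix w n)) < theta - delta) ->
  False.
Proof.
  intros Hfs Hc Hphi Hc0 Hcd Hd1 Hcd_random Hdelta Htc Htd Hfreq.
  assert (Hflip01 : forall p, 0 <= p <= 1 -> 0 <= flip_prob flip p <= 1)
    by (intros p Hp; unfold flip_prob; destruct flip; lra).
  assert (Htheta : delta < theta).
  { destruct (Hfreq 0%nat) as [n [_ Hn]]. destruct (Hfs (prefix w n)) as [H0 [_ H1]].
    pose proof (Hflip01 _ (conj H0 H1)). lra. }
  (* With [theta - delta / 2 < C < theta] and [e < delta / 8], forecasts below
     [theta - delta < C - 2 e] are detected, and detected ones are below [C - e]. *)
  destruct (exists_ratio_between (theta - delta / 2) theta ltac:(lra) ltac:(lra))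
    as [Pc [Q [HQ [HC1 HC2]]]].
  set (C := INR Pc / INR Q) in *.
  destruct (exists_inv_nat_lt (delta / 8) ltac:(lra)) as [E [HE He]].
  set (e := / INR E) in *.
  assert (He0 : 0 < e) by (apply Rinv_0_lt_compat, lt_0_INR; lia).
  assert (HQr := lt_0_INR _ HQ).
  assert (HPQ : (Pc <= Q)%nat).
  { apply INR_le. pose proof (Hflip01 c ltac:(lra)).
    apply (Rmult_le_reg_r (/ INR Q)); [now apply Rinv_0_lt_compat|].
    rewrite Rinv_r by lra. unfold C, Rdiv in *. lra. }
  assert (H4 : (4 * Q < Pc * E)%nat).
  { assert (H4e : 4 * e < C) by lra.
    apply INR_lt. rewrite !mult_INR. replace (INR 4) with 4 by (simpl; lra).
    apply (Rdiv_lt_cross 4 (INR E) (INR Pc) (INR Q)); [apply lt_0_INR; lia|lra|].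
    exact H4e. }
  destruct (computable_decider phi flip (C - 3 * e / 2) (e / 2) Hc ltac:(lra))
    as [D [HD [HD1 HD2]]].
  apply (frequent_deviation_contradiction phi w D flip E Pc Q c d); auto; fold C e.
  - intros s Hs. specialize (HD1 s Hs). lra.
  - intros N. destruct (Hfreq N) as [n [Hn Hlt]]. exists n. split; [exact Hn|].
    apply HD2. lra.
  - lra.
  - lra.
Qed.

(** * Eventually confined forecasts *)

Section Stopping.
Variable keep : nat -> bool.
Variable start : nat.

(* The state [triple b f p] reached after [s] records whether a proper prefix of [s] has
   code [start] ([b]), whether the process is frozen ([f]) and the code [p] of the
   situation at which it was frozen: the first one from [start] on failing [keep]. *)
Definition stop_update (u p b : nat) : nat :=
  let started := ifz (triple1 u) (Nat.b2n (p =? start)) 1 in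
  ifz (started * ifz (triple2 u) (1 - Nat.b2n (keep p)) 0)
      (triple started (triple2 u) (triple3 u))
      (triple started 1 p).

Definition stop_state (s : list bool) : nat := sit_fold stop_update [] s (triple 0 0 0).

Definition started (s : list bool) : bool :=
  negb (triple1 (stop_state s) =? 0) || (enc_sit s =? start).

Definition frozen (s : list bool) : bool := negb (triple2 (stop_state s) =? 0).

Definition stopped_at (s : list bool) : list bool :=
  if frozen s then dec_sit (triple3 (stop_state s)) else s.

Lemma stop_state_nil : stop_state [] = triple 0 0 0.
Proof. reflexivity. Qed.

Lemma stop_state_snoc s x :
  stop_state (s ++ [x]) =
  if (started s && negb (frozen s) && negb (keep (enc_sit s)))%bool then triple 1 1 (enc_sit s)
  else triple (Nat.b2n (started s)) (triple2 (stop_state s)) (triple3 (stop_state s)).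
Proof.
  unfold stop_state at 1. rewrite sit_fold_snoc. cbn [app]. fold (stop_state s).
  unfold stop_update, ifz, started, frozen. set (u := stop_state s).
  destruct (triple1 u =? 0), (enc_sit s =? start), (triple2 u =? 0), (keep (enc_sit s));
    reflexivity.
Qed.

Lemma started_snoc s x : started (s ++ [x]) = (started s || (enc_sit (s ++ [x]) =? start))%bool.
Proof.
  unfold started at 1. rewrite stop_state_snoc.
  destruct (started s) eqn:Hs; simpl; [now destruct (negb _ && _)%bool; rewrite triple1_triple|].
  now rewrite triple1_triple.
Qed.

Lemma frozen_snoc s x :
  frozen (s ++ [x]) = (frozen s || started s && negb (keep (enc_sit s)))%bool.
Proof.
  unfold frozen at 1. rewrite stop_state_snoc.
  destruct (started s), (frozen s) eqn:Hf, (keep (enc_sit s)); simpl;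
    rewrite ?triple2_triple; unfold frozen in Hf; try reflexivity; exact Hf.
Qed.

Lemma stopped_at_snoc s x :
  stopped_at (s ++ [x]) = if frozen (s ++ [x]) then stopped_at s else s ++ [x].
Proof.
  unfold stopped_at. rewrite frozen_snoc, stop_state_snoc.
  destruct (started s), (frozen s), (keep (enc_sit s)); simpl;
    rewrite ?triple3_triple, ?dec_enc_sit; reflexivity.
Qed.

Lemma frozen_started s : frozen s = true -> started s = true.
Proof.
  induction s as [|x s IH] using rev_ind.
  - unfold frozen. now rewrite stop_state_nil, triple2_triple.
  - rewrite frozen_snoc, started_snoc.
    destruct (frozen s); [now rewrite IH|]. now destruct (started s).
Qed.

Lemma rec3_stop_update : rec1 (fun p => Nat.b2n (keep p)) -> rec3 stop_update.
Proof.
  intros Hkeep.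
  pose proof (rec3_comp3 _ _ _ _ (rec3_comp1 _ _ rec3_fst rec1_triple1)
                (rec3_comp2 _ _ _ rec3_snd (rec3_const start) rec2_eqb) (rec3_const 1) rec3_ifz)
    as Hstarted.
  pose proof (rec3_comp1 _ _ rec3_fst rec1_triple2) as H2.
  pose proof (rec3_comp1 _ _ rec3_fst rec1_triple3) as H3.
  exact (rec3_comp3 _ _ _ _
    (rec3_comp2 _ _ _ Hstarted
       (rec3_comp3 _ _ _ _ H2
          (rec3_comp2 _ _ _ (rec3_const 1) (rec3_comp1 _ _ rec3_snd Hkeep) rec2_sub)
          (rec3_const 0) rec3_ifz) rec2_mul)
    (rec3_triple _ _ _ Hstarted H2 H3) (rec3_triple _ _ _ Hstarted (rec3_const 1) rec3_snd)
    rec3_ifz).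
Qed.

Definition started_code (e : nat) : nat :=
  ifz (triple1 (fold_code stop_update (triple 0 0 0) e)) (Nat.b2n (e =? start)) 1.

Definition stopped_code (e : nat) : nat :=
  let u := fold_code stop_update (triple 0 0 0) e in ifz (triple2 u) e (triple3 u).

Lemma stop_codes_enc s :
  started_code (enc_sit s) = Nat.b2n (started s) /\
  stopped_code (enc_sit s) = enc_sit (stopped_at s).
Proof.
  unfold started_code, stopped_code. rewrite fold_code_enc. fold (stop_state s).
  unfold started, stopped_at, frozen, ifz.
  destruct (triple1 (stop_state s) =? 0), (enc_sit s =? start), (triple2 (stop_state s) =? 0);
    simpl; rewrite ?enc_dec_sit; split; reflexivity.
Qed.

Lemma rec1_stop_codes : rec1 (fun p => Nat.b2n (keep p)) -> rec1 started_code /\ rec1 stopped_code.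
Proof.
  intros Hkeep. pose proof (rec1_fold_code _ (triple 0 0 0) (rec3_stop_update Hkeep)) as Hst. split.
  - exact (rec1_comp3 _ _ _ _ (rec1_comp1 _ _ Hst rec1_triple1)
             (rec1_comp2 _ _ _ rec1_id (rec1_const start) rec2_eqb) (rec1_const 1) rec3_ifz).
  - exact (rec1_comp3 _ _ _ _ (rec1_comp1 _ _ Hst rec1_triple2) rec1_id
             (rec1_comp1 _ _ Hst rec1_triple3) rec3_ifz).
Qed.

Definition stopped_process (T : list bool -> R) (M : nat) (s : list bool) : R :=
  if started s then T (stopped_at s) / INR M else 1.

Lemma stopped_process_lsc T M :
  rec1 (fun p => Nat.b2n (keep p)) -> (0 < M)%nat -> lower_semicomputable T ->
  lower_semicomputable (stopped_process T M).
Proof.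
  intros Hkeep HM [qT [HqT [Hmono Hcv]]].
  destruct (recursive_rat_code qT HqT) as [gT [HgT HgTq]].
  destruct (rec1_stop_codes Hkeep) as [Hstarted Hstopped].
  set (approx := fun x => gT (npair (stopped_code (unpair1 x)) (unpair2 x))).
  assert (Happrox : rec1 approx) by exact (rec1_comp1 _ _
    (rec1_comp2 _ _ _ (rec1_comp1 _ _ rec1_unpair1 Hstopped) rec1_unpair2 rec2_npair) HgT).
  exists (fun d n => if started d then qT (stopped_at d) n / INR M else 1). split; [|split].
  - apply (recursive_rat_of_code _ (fun x => ifz (started_code (unpair1 x)) (triple 1 0 0)
                                       (qdiv_nat M (approx x)))).
    + exact (rec1_comp3 _ _ _ _ (rec1_comp1 _ _ rec1_unpair1 Hstarted) (rec1_const _)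
               (rec1_comp1 _ _ Happrox (rec1_qdiv_nat M)) rec3_ifz).
    + intros d n. unfold approx. rewrite unpair1_npair, unpair2_npair.
      destruct (stop_codes_enc d) as [-> ->]. destruct (started d); unfold ifz; simpl.
      * now rewrite qval_qdiv_nat, HgTq.
      * unfold qval. rewrite triple1_triple, triple2_triple, triple3_triple. simpl. lra.
  - intros d n. destruct (started d); [|lra]. apply Rmult_le_compat_r; [|apply Hmono].
    left. apply Rinv_0_lt_compat, lt_0_INR, HM.
  - intros d. unfold stopped_process. destruct (started d); [|apply Un_cv_const].
    apply CV_mult; [apply Hcv|apply Un_cv_const].
Qed.

End Stopping.

Lemma started_length sigma keep s :
  started keep (enc_sit sigma) s = true -> (length sigma <= length s)%nat.
Proof.
  induction s as [|x s IH] using rev_ind.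
  - unfold started. rewrite stop_state_nil, triple1_triple. intros H.
    apply orb_true_iff in H as [H|H]; [discriminate|].
    apply Nat.eqb_eq, enc_sit_inj in H. now rewrite <- H.
  - rewrite started_snoc, length_app. intros H. apply orb_true_iff in H as [H|H].
    + specialize (IH H). simpl. lia.
    + apply Nat.eqb_eq, enc_sit_inj in H. rewrite <- H, length_app. simpl. lia.
Qed.

Lemma stopped_process_increment keep start T M s x :
  (0 < M)%nat -> started keep start s = true ->
  stopped_process keep start T M (s ++ [x]) - stopped_process keep start T M s =
  if (frozen keep start s || negb (keep (enc_sit s)))%bool then 0 else (T (s ++ [x]) - T s) / INR M.
Proof.
  intros HM Hs. pose proof (lt_0_INR _ HM).
  unfold stopped_process. rewrite started_snoc, Hs, stopped_at_snoc, frozen_snoc, Hs. simpl.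
  destruct (frozen keep start s) eqn:Hf, (keep (enc_sit s)); simpl; try ring.
  unfold stopped_at. rewrite Hf. field. lra.
Qed.

Lemma stopped_process_before_start keep sigma T M s x :
  (0 < M)%nat -> T sigma <= INR M -> started keep (enc_sit sigma) s = false ->
  stopped_process keep (enc_sit sigma) T M (s ++ [x]) <= 1.
Proof.
  intros HM HT Hs. pose proof (lt_0_INR _ HM).
  unfold stopped_process. rewrite started_snoc, Hs. simpl.
  destruct (enc_sit (s ++ [x]) =? enc_sit sigma) eqn:He; [|lra].
  apply Nat.eqb_eq, enc_sit_inj in He.
  rewrite stopped_at_snoc, frozen_snoc, Hs.
  destruct (frozen keep (enc_sit sigma) s) eqn:Hf; [apply frozen_started in Hf; congruence|].
  simpl. rewrite He. apply (Rmult_le_reg_r (INR M)); [lra|].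
  unfold Rdiv. rewrite Rmult_assoc, Rinv_l by lra. lra.
Qed.

Lemma stopped_process_test phi r1 r2 keep sigma T M :
  forecasting_system phi phi -> (forall s, keep (enc_sit s) = true -> r1 <= phi s <= r2) ->
  sigma <> [] -> (0 < M)%nat -> T sigma <= INR M ->
  test_supermartingale (fun _ => r1) (fun _ => r2) T ->
  test_supermartingale phi phi (stopped_process keep (enc_sit sigma) T M).
Proof.
  intros Hfs Hkeep Hsigma HM HTsigma [T0 [Tpos Tsup]].
  assert (HMr := lt_0_INR _ HM).
  split; [|split].
  - unfold stopped_process, started. rewrite stop_state_nil, triple1_triple.
    destruct (enc_sit [] =? enc_sit sigma) eqn:E; [|reflexivity].
    apply Nat.eqb_eq, enc_sit_inj in E. now subst.
  - intros s. unfold stopped_process. destruct (started keep _ s); [|lra].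
    apply Rmult_le_pos; [apply Tpos|left; now apply Rinv_0_lt_compat].
  - intros s. rewrite upper_exp_point. destruct (Hfs s) as [Hp0 [_ Hp1]].
    destruct (started keep (enc_sit sigma) s) eqn:Hs.
    + rewrite !stopped_process_increment by assumption.
      destruct (frozen keep _ s || negb (keep (enc_sit s)))%bool eqn:Hf; [lra|].
      apply orb_false_iff in Hf as [_ Hf]. apply negb_false_iff in Hf.
      pose proof (upper_exp_ge r1 r2 (fun x => T (s ++ [x]) - T s) (phi s) (Hkeep s Hf)).
      pose proof (Tsup s). simpl in *.
      replace (phi s * _ + _) with
        ((phi s * (T (s ++ [true]) - T s) + (1 - phi s) * (T (s ++ [false]) - T s)) * / INR M)
        by (field; lra).
      pose proof (Rinv_0_lt_compat _ HMr). nra.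
    + assert (Hone : stopped_process keep (enc_sit sigma) T M s = 1)
        by (unfold stopped_process; now rewrite Hs).
      rewrite Hone.
      pose proof (stopped_process_before_start keep sigma T M s true HM HTsigma Hs).
      pose proof (stopped_process_before_start keep sigma T M s false HM HTsigma Hs). nra.
Qed.

Lemma stopped_process_along w keep N0 T M :
  (forall n, (N0 <= n)%nat -> keep (enc_sit (prefix w n)) = true) ->
  forall n, (S N0 <= n)%nat ->
    stopped_process keep (enc_sit (prefix w (S N0))) T M (prefix w n) = T (prefix w n) / INR M.
Proof.
  intros Hkeep n Hn. set (start := enc_sit (prefix w (S N0))).
  assert (Hrun : forall j, started keep start (prefix w (S N0 + j)) = true /\
                           frozen keep start (prefix w (S N0 + j)) = false).
  { induction j as [|j [IH1 IH2]].
    - rewrite Nat.add_0_r. split.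
      + unfold started. fold start. now rewrite Nat.eqb_refl, orb_true_r.
      + assert (Hpre : started keep start (prefix w N0) = false).
        { destruct (started keep start (prefix w N0)) eqn:E; [|reflexivity].
          apply started_length in E. rewrite !prefix_length in E. lia. }
        rewrite prefix_S, frozen_snoc, Hpre.
        destruct (frozen keep start (prefix w N0)) eqn:E; [|reflexivity].
        apply frozen_started in E. congruence.
    - rewrite Nat.add_succ_r, prefix_S, started_snoc, frozen_snoc, IH1, IH2, Hkeep by lia.
      split; reflexivity. }
  destruct (Hrun (n - S N0)%nat) as [H1 H2]. replace (S N0 + (n - S N0))%nat with n in * by lia.
  unfold stopped_process, stopped_at. now rewrite H1, H2.
Qed.

Lemma eventually_confined_random phi w r1 r2 (keep : nat -> bool) :
  forecasting_system phi phi -> rec1 (fun p => Nat.b2n (keep p)) ->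
  (forall s, keep (enc_sit s) = true -> r1 <= phi s <= r2) ->
  (exists N, forall n, (N <= n)%nat -> keep (enc_sit (prefix w n)) = true) ->
  ML_random phi phi w -> ML_random_I r1 r2 w.
Proof.
  intros Hfs Hkeep Hr [N0 HN0] Hphi [T [HlscT [HT Hunb]]]. apply Hphi.
  set (sigma := prefix w (S N0)).
  destruct (INR_archimed 1 (T sigma) ltac:(lra)) as [M HM].
  assert (HMr : T sigma < INR (S M)) by (rewrite S_INR; lra).
  exists (stopped_process keep (enc_sit sigma) T (S M)). split; [|split].
  - apply stopped_process_lsc; auto. lia.
  - apply (stopped_process_test phi r1 r2); auto; [|lia|lra].
    intros E. apply (f_equal (@length bool)) in E. unfold sigma in E.
    rewrite prefix_length in E. discriminate.
  - intros B N. destruct (Hunb (B * INR (S M)) (S N0 + N)%nat) as [n [Hn HB]].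
    exists n. split; [lia|]. unfold sigma. rewrite stopped_process_along by (auto; lia).
    assert (0 < INR (S M)) by (apply lt_0_INR; lia).
    apply (Rmult_lt_reg_r (INR (S M))); [lra|]. unfold Rdiv.
    rewrite Rmult_assoc, Rinv_l by lra. lra.
Qed.

Lemma eventually_near_random phi w a b eps :
  forecasting_system phi phi -> computable phi -> ML_random phi phi w -> 0 < eps ->
  (exists N, forall n, (N <= n)%nat -> a - eps / 2 < phi (prefix w n) < b + eps / 2) ->
  ML_random_I (Rmax (a - eps) 0) (Rmin (b + eps) 1) w.
Proof.
  intros Hfs Hc Hphi Heps [N HN].
  destruct (computable_decider phi true (1 - a + 3 * eps / 4) (eps / 4) Hc ltac:(lra))
    as [DL [HDL [HDL1 HDL2]]].
  destruct (computable_decider phi false (b + 3 * eps / 4) (eps / 4) Hc ltac:(lra))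
    as [DH [HDH [HDH1 HDH2]]].
  unfold flip_prob in *.
  apply (eventually_confined_random phi w _ _ (fun p => DL p && DH p)%bool Hfs).
  - eapply rec1_ext; [|exact (rec1_comp2 _ _ _ HDL HDH rec2_mul)].
    intros p. cbv beta. now destruct (DL p), (DH p).
  - intros s Hs. apply andb_true_iff in Hs as [Hs1 Hs2].
    specialize (HDL1 s Hs1). specialize (HDH1 s Hs2). destruct (Hfs s) as [H0 [_ H1]].
    split; [apply Rmax_lub|apply Rmin_glb]; lra.
  - exists N. intros n Hn. specialize (HN n Hn).
    rewrite HDL2, HDH2 by lra. reflexivity.
  - exact Hphi.
Qed.

(** * Lower and upper limits of the forecasts *)

Lemma liminf_exists (p : nat -> R) : (forall n, 0 <= p n <= 1) ->
  exists a, 0 <= a <= 1 /\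
    (forall e, 0 < e -> exists N, forall n, (N <= n)%nat -> a - e < p n) /\
    (forall e, 0 < e -> forall N, exists n, (N <= n)%nat /\ p n < a + e).
Proof.
  intros Hp.
  set (lower := fun c => exists N, forall n, (N <= n)%nat -> c <= p n).
  assert (Hlower_le1 : forall c, lower c -> c <= 1)
    by (intros c [N HN]; specialize (HN N (le_n _)); specialize (Hp N); lra).
  assert (Hlower0 : lower 0) by (exists 0%nat; intros; apply Hp).
  destruct (completeness lower) as [a [Hub Hlub]]; [now exists 1|now exists 0|].
  exists a. split; [split; [now apply Hub|now apply Hlub]|split].
  - intros e He. apply NNPP. intros H.
    assert (Hub' : is_upper_bound lower (a - e)).
    { intros c [N HN]. apply Rnot_lt_le. intros Hc. apply H.
      exists N. intros n Hn. specialize (HN n Hn). lra. }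
    specialize (Hlub _ Hub'). lra.
  - intros e He N. apply NNPP. intros H.
    assert (Hae : lower (a + e)).
    { exists N. intros n Hn. apply Rnot_lt_le. intros Hlt. apply H. now exists n. }
    specialize (Hub _ Hae). lra.
Qed.

Lemma liminf_limsup_exist (p : nat -> R) : (forall n, 0 <= p n <= 1) ->
  exists a b, is_interval a b /\
    (forall e, 0 < e -> exists N, forall n, (N <= n)%nat -> a - e < p n < b + e) /\
    (forall e, 0 < e -> forall N, exists n, (N <= n)%nat /\ p n < a + e) /\
    (forall e, 0 < e -> forall N, exists n, (N <= n)%nat /\ b - e < p n).
Proof.
  intros Hp.
  destruct (liminf_exists p Hp) as [a [Ha [Ha1 Ha2]]].
  destruct (liminf_exists (fun n => 1 - p n)) as [a' [Ha' [Ha'1 Ha'2]]];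
    [intros n; specialize (Hp n); lra|].
  assert (Hev : forall e, 0 < e -> exists N, forall n, (N <= n)%nat -> a - e < p n < 1 - a' + e).
  { intros e He. destruct (Ha1 e He) as [N1 H1], (Ha'1 e He) as [N2 H2].
    exists (N1 + N2)%nat. intros n Hn. specialize (H1 n ltac:(lia)). specialize (H2 n ltac:(lia)).
    lra. }
  exists a, (1 - a'). split; [|split; [exact Hev|split; [exact Ha2|]]].
  - repeat split; try lra. apply Rle_plus_epsilon. intros e He.
    destruct (Hev (e / 2) ltac:(lra)) as [N HN]. specialize (HN N (le_n _)). lra.
  - intros e He N. destruct (Ha'2 e He N) as [n [Hn Hlt]]. exists n. split; [exact Hn|lra].
Qed.

Lemma is_interval_enlarge a b e :
  is_interval a b -> 0 < e -> is_interval (Rmax (a - e) 0) (Rmin (b + e) 1).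
Proof.
  intros [Ha [Hab Hb]] He. split; [apply Rmax_r|split; [|apply Rmin_r]].
  apply Rmax_lub; apply Rmin_glb; lra.
Qed.

Lemma almost_ML_random_enlargements a b w : is_interval a b ->
  (forall e, 0 < e -> ML_random_I (Rmax (a - e) 0) (Rmin (b + e) 1) w) ->
  almost_ML_random a b w.
Proof.
  intros Hab Hr e1 e2 He1 He2. set (e := Rmin e1 e2).
  assert (He : 0 < e) by (now apply Rmin_glb_lt).
  pose proof (Rmin_l e1 e2). pose proof (Rmin_r e1 e2).
  apply (ML_random_I_widen (Rmax (a - e) 0) (Rmin (b + e) 1)); [| | |apply Hr; exact He].
  - apply Rle_max_compat_r. unfold e in *. lra.
  - destruct (is_interval_enlarge a b e Hab He) as [_ [Hle _]]. exact Hle.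
  - apply Rle_min_compat_r. unfold e in *. lra.
Qed.

Lemma I_ML_within c d w x :
  is_interval c d -> almost_ML_random c d w -> I_ML w x -> c <= x <= d.
Proof.
  intros Hcd Hr Hx.
  assert (Hin : forall e, 0 < e -> c - e <= x <= d + e).
  { intros e He. destruct (Hx _ _ (is_interval_enlarge c d e Hcd He) (Hr e e He He)).
    pose proof (Rmax_l (c - e) 0). pose proof (Rmin_l (d + e) 1). lra. }
  split; apply Rle_plus_epsilon; intros e He; specialize (Hin e He); lra.
Qed.

Lemma forecast_limits_interval phi w :
  forecasting_system phi phi -> computable phi -> ML_random phi phi w ->
  exists a b, is_interval a b /\
    (forall c d, is_interval c d -> ML_random_I c d w -> c <= a /\ b <= d) /\
    almost_ML_random a b w.
Proof.
  intros Hfs Hc Hphi.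
  destruct (liminf_limsup_exist (fun n => phi (prefix w n))) as [a [b [Hab [Hev [Hlow Hup]]]]].
  { intros n. destruct (Hfs (prefix w n)) as [H0 [_ H1]]. lra. }
  exists a, b. split; [exact Hab|split].
  - intros c d [Hc0 [Hcd Hd1]] Hrand. split.
    + apply Rnot_lt_le. intros Hac.
      apply (frequent_deviation_not_random phi w false c d c ((c - a) / 2)); auto; simpl; try lra.
      intros N. destruct (Hlow ((c - a) / 2) ltac:(lra) N) as [n [Hn Hlt]].
      exists n. split; [exact Hn|lra].
    + apply Rnot_lt_le. intros Hdb.
      apply (frequent_deviation_not_random phi w true c d (1 - d) ((b - d) / 2)); auto;
        simpl; try lra.
      intros N. destruct (Hup ((b - d) / 2) ltac:(lra) N) as [n [Hn Hlt]].
      exists n. split; [exact Hn|lra].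
  - apply almost_ML_random_enlargements; [exact Hab|]. intros e He.
    apply (eventually_near_random phi); auto.
    destruct (Hev (e / 2) ltac:(lra)) as [N HN]. exists N. exact HN.
Qed.

Theorem proposition4 (phi : list bool -> R) (w : nat -> bool) :
  forecasting_system phi phi ->
  computable phi ->
  ML_random phi phi w ->
  exists a b : R,
    is_interval a b /\
    (forall x, I_ML w x <-> (a <= x /\ x <= b)) /\
    almost_ML_random a b w /\
    (forall c d, is_interval c d -> almost_ML_random c d w ->
       forall x, I_ML w x -> c <= x /\ x <= d).
Proof.
  intros Hfs Hc Hphi.
  destruct (forecast_limits_interval phi w Hfs Hc Hphi) as [a [b [Hab [Hmin Halmost]]]].
  exists a, b. split; [exact Hab|split; [|split; [exact Halmost|]]].
  - intros x. split; [now apply I_ML_within|].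
    intros Hx c d Hcd Hrand. destruct (Hmin c d Hcd Hrand). lra.
  - intros c d Hcd Hcd_almost x Hx. now apply (I_ML_within c d w x).
Qed.
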